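(* If $G$ is a $\{P_5,\overline{P_5},\text{bull}\}$-free graph, then at least one of the following holds: $|V(G)|\le 2$; $G$ is isomorphic to $C_5$; $G$ has a homogeneous set; $G$ or $\overline{G}$ is a half graph.
   Context: All graphs are finite and simple. $P_n$ is the path on $n$ vertices, $C_n$ the cycle of length $n$, $\overline{G}$ the complement. $G$ is $\mathcal F$-free if it has no induced subgraph isomorphic to a member of $\mathcal F$. The bull is the graph with vertex set $\{x_1,x_2,x_3,y,z\}$ and edge set $\{x_1x_2,x_2x_3,x_1x_3,x_1y,x_2z\}$. A vertex $b\notin X$ is mixed on $X$ if it has both a neighbor and a non-neighbor in $X$. A homogeneous set is a set $X\subseteq V(G)$ with $1<|X|<|V(G)|$ such that no vertex outside $X$ is mixed on $X$. For $k\ge1$, $O_k$ is the bipartite graph with vertex set $\{a_1,\dots,a_k,b_1,\dots,b_k\}$ in which the only edges are $a_ib_j$ for $i+j\ge k+1$; a half graph is a graph isomorphic to $O_k$ for some $k$. *)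

(* Simple graphs: a symmetric irreflexive relation on a finType. *)
From mathcomp Require Import all_boot.
Set Implicit Arguments. Unset Strict Implicit. Unset Printing Implicit Defensive.

Definition compl (T : finType) (e : rel T) : rel T :=
  fun x y => (x != y) && ~~ e x y.

Definition has_induced (H : finType) (eH : rel H) (T : finType) (e : rel T) : Prop :=
  exists f : H -> T, injective f /\ forall x y, e (f x) (f y) = eH x y.

Definition isomorphic (T : finType) (e : rel T) (H : finType) (eH : rel H) : Prop :=
  exists f : T -> H, bijective f /\ forall x y, eH (f x) (f y) = e x y.

Definition P5 : rel 'I_5 := fun i j => (i.+1 == j :> nat) || (j.+1 == i :> nat).

Definition C5 : rel 'I_5 := fun i j =>
  [|| P5 i j, (i == 0 :> nat) && (j == 4 :> nat) | (i == 4 :> nat) && (j == 0 :> nat)].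

(* bull: x1=0, x2=1, x3=2, y=3, z=4; edges x1x2, x2x3, x1x3, x1y, x2z *)
Definition bull_edge (i j : nat) : bool :=
  [|| (i == 0) && (j == 1), (i == 1) && (j == 2), (i == 0) && (j == 2),
      (i == 0) && (j == 3) | (i == 1) && (j == 4)].
Definition bull : rel 'I_5 := fun i j => bull_edge i j || bull_edge j i.

Definition mixed (T : finType) (e : rel T) (b : T) (X : {set T}) : bool :=
  [exists x in X, e b x] && [exists y in X, ~~ e b y].

Definition homogeneous (T : finType) (e : rel T) (X : {set T}) : bool :=
  (1 < #|X| < #|T|) && [forall b, (b \notin X) ==> ~~ mixed e b X].

Definition has_homogeneous_set (T : finType) (e : rel T) : Prop :=
  exists X : {set T}, homogeneous e X.

(* O_k : vertices inl i = a_(i+1), inr j = b_(j+1); a_i b_j edge iff i+j >= k+1 *)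
Definition half_rel (k : nat) : rel ('I_k + 'I_k)%type := fun u v =>
  match u, v with
  | inl i, inr j => k.+1 <= i.+1 + j.+1
  | inr j, inl i => k.+1 <= i.+1 + j.+1
  | _, _ => false
  end.

Definition is_half_graph (T : finType) (e : rel T) : Prop :=
  exists k, 0 < k /\ @isomorphic T e _ (@half_rel k).

(* Assume G is prime (no homogeneous set) with at least three vertices.
   1. Induced copies of 5-vertex patterns are recognised from adjacencies:
      the patterns are twin-free, so adjacency-preserving maps are injective.
      The forbidden family is closed under complementation, and so are the
      hypotheses and the conclusion.
   2. Closure principle: in a prime graph, a vertex set H such that every
      outside vertex is non-mixed on H or a clone of a vertex of H, and such
      that no outside vertex separates a clone of h from h, is everything.
      By Seinsche's theorem a prime graph has an induced P4.
   3. If G is C5-free, a P4 is a half-graph chain of length 2.  Every vertex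
      attaches to a chain in one of six ways, and a separating vertex as in 2
      lengthens the chain in G or (for length 2) in its complement.  So a
      longest chain of G or of its complement spans G: G is a half graph or
      the complement of one.
   4. If G contains an induced C5, the attachments of one or two vertices to
      the cycle are enumerated by computation on small adjacency matrices,
      and the closure principle shows that G is C5. *)

From mathcomp Require Import all_boot zify.
From Stdlib Require Import Classical_Prop.
Set Implicit Arguments. Unset Strict Implicit. Unset Printing Implicit Defensive.

Definition twinfree (H : finType) (eH : rel H) : bool :=
  [forall x, forall y, (x != y) ==> (eH x y || [exists z, eH x z != eH y z])].

Ltac twinfree5 := apply/forallP; case=> [[|[|[|[|[|?]]]]] ?] //; apply/forallP;
  case=> [[|[|[|[|[|?]]]]] ?] //; apply/implyP => /= _; apply/existsP;
  first [ by exists (@Ordinal 5 0 isT) | by exists (@Ordinal 5 1 isT)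
        | by exists (@Ordinal 5 2 isT) | by exists (@Ordinal 5 3 isT)
        | by exists (@Ordinal 5 4 isT) ].

Ltac pattern_cases := by case=> [[|[|[|[|[|?]]]]] ?] //; case=> [[|[|[|[|[|?]]]]] ?].

Lemma twinfree_P5 : twinfree P5. Proof. twinfree5. Qed.
Lemma twinfree_house : twinfree (compl P5). Proof. twinfree5. Qed.
Lemma twinfree_bull : twinfree bull. Proof. twinfree5. Qed.
Lemma twinfree_C5 : twinfree C5. Proof. twinfree5. Qed.

Section InducedCopies.
Variables (T : finType) (e : rel T).
Hypothesis esym : symmetric e.
Hypothesis eirr : irreflexive e.

Lemma induced_from_hom (H : finType) (eH : rel H) (f : H -> T) :
  (forall x y, e (f x) (f y) = eH x y) -> twinfree eH -> has_induced eH e.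
Proof.
move=> Hf /forallP tw; exists f; split => // x y fxy; apply/eqP/negPn/negP => nxy.
move: (tw x) => /forallP /(_ y) /implyP /(_ nxy) /orP [hxy | /existsP [z hz]].
- by move: hxy; rewrite -Hf fxy eirr.
- by move: hz; rewrite -!Hf fxy eqxx.
Qed.

Definition vec5 (v0 v1 v2 v3 v4 : T) (i : 'I_5) : T := nth v0 [:: v0; v1; v2; v3; v4] i.

Ltac adjacency25 := move=> [[|[|[|[|[|?]]]]] ?] [[|[|[|[|[|?]]]]] ?] //=; rewrite ?eirr //;
  first [ done | exact: negbTE | by rewrite esym | by rewrite esym; apply: negbTE ].

Lemma P5_of v0 v1 v2 v3 v4 :
  e v0 v1 -> e v1 v2 -> e v2 v3 -> e v3 v4 ->
  ~~ e v0 v2 -> ~~ e v0 v3 -> ~~ e v0 v4 -> ~~ e v1 v3 -> ~~ e v1 v4 -> ~~ e v2 v4 ->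
  has_induced P5 e.
Proof.
move=> *; apply: (@induced_from_hom _ _ (vec5 v0 v1 v2 v3 v4)); last exact: twinfree_P5.
adjacency25.
Qed.

Lemma house_of c0 c1 c2 c3 c4 :
  e c0 c1 -> e c1 c2 -> e c2 c3 -> e c3 c4 -> e c4 c0 -> e c0 c2 ->
  ~~ e c0 c3 -> ~~ e c1 c3 -> ~~ e c1 c4 -> ~~ e c2 c4 ->
  has_induced (compl P5) e.
Proof.
move=> *; apply: (@induced_from_hom _ _ (vec5 c0 c3 c1 c4 c2)); last exact: twinfree_house.
rewrite /compl; adjacency25.
Qed.

Lemma bull_of t0 t1 t2 p0 p1 :
  e t0 t1 -> e t1 t2 -> e t0 t2 -> e t0 p0 -> e t1 p1 ->
  ~~ e t0 p1 -> ~~ e t1 p0 -> ~~ e t2 p0 -> ~~ e t2 p1 -> ~~ e p0 p1 ->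
  has_induced bull e.
Proof.
move=> *; apply: (@induced_from_hom _ _ (vec5 t0 t1 t2 p0 p1)); last exact: twinfree_bull.
rewrite /bull /bull_edge; adjacency25.
Qed.

Lemma C5_of c0 c1 c2 c3 c4 :
  e c0 c1 -> e c1 c2 -> e c2 c3 -> e c3 c4 -> e c4 c0 ->
  ~~ e c0 c2 -> ~~ e c0 c3 -> ~~ e c1 c3 -> ~~ e c1 c4 -> ~~ e c2 c4 ->
  has_induced C5 e.
Proof.
move=> *; apply: (@induced_from_hom _ _ (vec5 c0 c1 c2 c3 c4)); last exact: twinfree_C5.
rewrite /C5 /P5; adjacency25.
Qed.

End InducedCopies.

Section Complement.
Variables (T : finType) (e : rel T).
Hypothesis esym : symmetric e.
Hypothesis eirr : irreflexive e.

Lemma compl_sym : symmetric (compl e).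
Proof. by move=> x y; rewrite /compl eq_sym esym. Qed.

Lemma compl_irr : irreflexive (compl e).
Proof. by move=> x; rewrite /compl eqxx. Qed.

Lemma complK x y : compl (compl e) x y = e x y.
Proof.
rewrite /compl; case: (eqVneq x y) => [->|_]; first by rewrite eirr.
by rewrite negbK.
Qed.

Lemma induced_compl (H : finType) (eH : rel H) :
  irreflexive eH -> has_induced eH (compl e) -> has_induced (compl eH) e.
Proof.
move=> hirr [f [fi fa]]; exists f; split => // x y.
case: (eqVneq x y) => [->|ne]; first by rewrite eirr /compl eqxx.
have fne : f x != f y by apply: contra ne => /eqP /fi ->.
by move: (fa x y); rewrite /compl fne ne /= => <-; rewrite negbK.
Qed.

Lemma induced_relabel (H1 H2 : finType) (e1 : rel H1) (e2 : rel H2) (s : H2 -> H1) :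
  injective s -> (forall i j, e1 (s i) (s j) = e2 i j) ->
  has_induced e1 e -> has_induced e2 e.
Proof.
move=> si sa [f [fi fa]]; exists (f \o s); split; first exact: inj_comp.
by move=> x y /=; rewrite fa sa.
Qed.

(* The forbidden family is closed under complementation: P5 and the house are
   complementary, and the bull and C5 are self-complementary. *)
Lemma no_P5_compl : ~ has_induced (compl P5) e -> ~ has_induced P5 (compl e).
Proof. move=> nH h; apply: nH; apply: induced_compl h; by case=> [[|[|[|[|[|?]]]]] ?]. Qed.

Lemma no_house_compl : ~ has_induced P5 e -> ~ has_induced (compl P5) (compl e).
Proof.
move=> nP h; apply: nP; apply: (@induced_relabel _ _ (compl (compl P5)) P5 id) => //.
- pattern_cases.
- by apply: induced_compl h; case=> [[|[|[|[|[|?]]]]] ?].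
Qed.

Definition ord5 : seq 'I_5 :=
  [:: @Ordinal 5 0 isT; @Ordinal 5 1 isT; @Ordinal 5 2 isT; @Ordinal 5 3 isT; @Ordinal 5 4 isT].

Lemma val_ord5 i : i < 5 -> val (nth ord0 ord5 i) = i.
Proof. by case: i => [|[|[|[|[|?]]]]]. Qed.

Definition relabel5 (s : seq nat) (i : 'I_5) : 'I_5 := nth ord0 ord5 (nth 0 s i).

Lemma no_bull_compl : ~ has_induced bull e -> ~ has_induced bull (compl e).
Proof.
move=> nB h; apply: nB; apply: (@induced_relabel _ _ (compl bull) bull (relabel5 [:: 3; 4; 2; 1; 0])).
- move=> i j /(congr1 val); move: i j; case=> [[|[|[|[|[|?]]]]] ?] //; case=> [[|[|[|[|[|?]]]]] ?] //= _;
  exact: val_inj.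
- pattern_cases.
- by apply: induced_compl h; case=> [[|[|[|[|[|?]]]]] ?].
Qed.

Lemma no_C5_compl : ~ has_induced C5 e -> ~ has_induced C5 (compl e).
Proof.
move=> nC h; apply: nC; apply: (@induced_relabel _ _ (compl C5) C5 (relabel5 [:: 0; 2; 4; 1; 3])).
- move=> i j /(congr1 val); move: i j; case=> [[|[|[|[|[|?]]]]] ?] //; case=> [[|[|[|[|[|?]]]]] ?] //= _;
  exact: val_inj.
- pattern_cases.
- by apply: induced_compl h; case=> [[|[|[|[|[|?]]]]] ?].
Qed.

Lemma mixed_compl b (X : {set T}) : b \notin X -> mixed (compl e) b X = mixed e b X.
Proof.
move=> bX.
have E y : y \in X -> compl e b y = ~~ e b y.
  by move=> yX; rewrite /compl (_ : b != y) //; apply: contraNneq bX => ->.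
rewrite /mixed andbC; congr andb.
- by apply/exists_inP/exists_inP => -[y yX hy]; exists y => //; move: hy; rewrite E // negbK.
- by apply/exists_inP/exists_inP => -[y yX hy]; exists y => //; move: hy; rewrite E.
Qed.

Lemma homogeneous_compl (X : {set T}) : homogeneous (compl e) X = homogeneous e X.
Proof.
rewrite /homogeneous; congr andb; apply/forallP/forallP => H b; apply/implyP => bX;
  by move/implyP: (H b) => /(_ bX); rewrite mixed_compl.
Qed.

Lemma prime_compl : ~ has_homogeneous_set e -> ~ has_homogeneous_set (compl e).
Proof. by move=> np [X hX]; apply: np; exists X; rewrite -homogeneous_compl. Qed.

End Complement.

Section Seinsche.
Variable T : finType.

Definition P4free (e : rel T) (S : {set T}) := forall a b c d,
  a \in S -> b \in S -> c \in S -> d \in S ->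
  e a b -> e b c -> e c d -> ~~ e a c -> ~~ e a d -> ~~ e b d -> False.

Definition splits (e : rel T) (S X : {set T}) :=
  [/\ X \subset S, X != set0, X != S &
     (forall x y, x \in X -> y \in S :\: X -> e x y) \/
     (forall x y, x \in X -> y \in S :\: X -> ~~ e x y)].

Section AddVertex.
Variables (e : rel T) (S : {set T}) (v : T).
Hypothesis esym : symmetric e.
Hypothesis vS : v \notin S.
Hypothesis p4 : P4free e (v |: S).

(* Let S be split into parts P and Q with no edges between them, with v
   non-adjacent to some y in P and adjacent to some z in Q.  Then the
   non-neighbours of v in P are non-adjacent to the rest of v |: S, since an
   edge u t there would give the P4 z-v-t-u. *)
Lemma splits_by_nonneighbours (P Q : {set T}) y z :
  P \subset S -> Q \subset S -> (forall u, u \in S -> (u \in P) || (u \in Q)) ->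
  (forall p q, p \in P -> q \in Q -> ~~ e p q) ->
  y \in P -> ~~ e v y -> z \in Q -> e v z ->
  exists X, splits e (v |: S) X.
Proof.
move=> PS QS cov PQ yP vy zQ vz.
exists [set u in P | ~~ e v u]; split.
- by apply/subsetP => u; rewrite inE => /andP [uP _]; rewrite in_setU1 (subsetP PS) ?orbT.
- by apply/set0Pn; exists y; rewrite inE yP vy.
- apply/eqP => E; have : v \in [set u in P | ~~ e v u] by rewrite E setU11.
  by rewrite inE => /andP [vP _]; move: vS; rewrite (subsetP PS).
- right => u t; rewrite inE => /andP [uP nvu]; rewrite in_setD in_setU1 inE =>
    /andP [tX /orP [/eqP ->|tS]]; first by rewrite esym.
  case/orP: (cov t tS) => [tP|tQ]; last by apply: PQ.
  have vt : e v t by move: tX; rewrite tP /= negbK.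
  apply/negP => ut.
  have zS : z \in S by apply: (subsetP QS).
  have uS : u \in S by apply: (subsetP PS).
  apply: (@p4 z v t u); rewrite ?in_setU1 ?zS ?tS ?uS ?eqxx ?orbT //.
  + by rewrite esym.
  + by rewrite esym.
  + by rewrite esym; apply: PQ.
  + by rewrite esym; apply: PQ.
Qed.

Lemma splits_add_vertex (X : {set T}) :
  X \subset S -> X != set0 -> X != S ->
  (forall x y, x \in X -> y \in S :\: X -> ~~ e x y) ->
  exists X', splits e (v |: S) X'.
Proof.
move=> XS X0 XnS anti.
have subU (Z : {set T}) : Z \subset S -> Z \subset v |: S.
  by move=> ZS; apply: (subset_trans ZS); apply/subsetP => u uS; rewrite in_setU1 uS orbT.
have YS : S :\: X \subset S by apply/subsetP => u; rewrite in_setD => /andP [].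
have cov u : u \in S -> (u \in X) || (u \in S :\: X) by rewrite in_setD => ->; rewrite andbT orbN.
have anti' p q : p \in S :\: X -> q \in X -> ~~ e p q by move=> pY qX; rewrite esym anti.
have [x0 x0X] : exists x, x \in X by apply/set0Pn.
have vX : v \notin X by apply: contra vS; apply: (subsetP XS).
case: (boolP [forall x in X, ~~ e v x]) => [/forall_inP nX | /forall_inPn [a aX /negPn va]].
  exists X; split => //; first exact: subU.
  - by apply: contraNneq vX => ->; rewrite setU11.
  - right => x y xX; rewrite in_setD in_setU1 => /andP [yX /orP [/eqP ->|yS]].
    + by rewrite esym nX.
    + by apply: anti => //; rewrite in_setD yX.
case: (boolP [forall y in S :\: X, ~~ e v y]) => [/forall_inP nY | /forall_inPn [z zY /negPn vz]].
  exists (S :\: X); split; first exact: subU.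
  - have : X \proper S by rewrite properEneq XnS XS.
    by case/properP => _ [y yS yX]; apply/set0Pn; exists y; rewrite in_setD yS yX.
  - apply/eqP => E; have : v \in S :\: X by rewrite E setU11.
    by rewrite in_setD (negbTE vS) andbF.
  - right => x y xY; rewrite !in_setD in_setU1 => /andP [yY /orP [/eqP ->|yS]].
    + by rewrite esym nY.
    + by rewrite anti' //; move: yY; rewrite yS andbT negbK.
case: (boolP [forall u in S, e v u]) => [/forall_inP vS' | /forall_inPn [y yS vy]].
  exists [set v]; split; first by rewrite sub1set setU11.
  - by apply/set0Pn; exists v; rewrite inE.
  - apply/eqP => E; have : x0 \in [set v] by rewrite E in_setU1 (subsetP XS) ?orbT.
    by rewrite inE => /eqP x0v; move: vX; rewrite -x0v x0X.
  - left => x y; rewrite inE => /eqP ->; rewrite in_setD in_setU1 inE.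
    by case/andP => yv /orP [/eqP yv'|/vS'] //; move: yv; rewrite yv' eqxx.
case: (boolP (y \in X)) => yX.
- exact: (splits_by_nonneighbours XS YS cov anti yX vy zY vz).
- apply: (splits_by_nonneighbours YS XS _ anti' _ vy aX va) => [u uS|].
  + by rewrite orbC cov.
  + by rewrite in_setD yX.
Qed.

End AddVertex.

Lemma P4free_compl (e : rel T) S : symmetric e -> P4free e S -> P4free (compl e) S.
Proof.
move=> esym p4 a b c d aS bS cS dS hab hbc hcd nac nad nbd.
have nc u w : u != w -> ~~ compl e u w -> e u w by move=> uw; rewrite /compl uw /= negbK.
have cs := compl_sym esym.
have ac : a != c by apply/eqP => E; move: nad; rewrite E hcd.
have ad : a != d by apply/eqP => E; move: nac; rewrite E cs hcd.
have bd : b != d by apply/eqP => E; move: nad; rewrite -E hab.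
apply: (p4 c a d b) => //.
- by rewrite esym; apply: nc.
- exact: nc.
- by rewrite esym; apply: nc.
- by move: hcd => /andP [].
- by move: hbc; rewrite cs => /andP [].
- by move: hab => /andP [].
Qed.

Lemma seinsche (e : rel T) n (S : {set T}) :
  symmetric e -> #|S| = n.+2 -> P4free e S -> exists X, splits e S X.
Proof.
move=> esym; elim: n S => [|n IH] S cS p4.
- have /cards2P [a [b [ab ES]]] : #|S| == 2 by rewrite cS.
  subst S; exists [set a]; split.
  + by rewrite sub1set in_set2 eqxx.
  + by apply/set0Pn; exists a; rewrite inE.
  + apply/eqP => E; have : b \in [set a] by rewrite E in_set2 eqxx orbT.
    by rewrite inE eq_sym (negbTE ab).
  + have yb y : y \in [set a; b] :\: [set a] -> y = b.
      by rewrite in_setD in_set2 inE => /andP [/negbTE -> /eqP].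
    by case: (boolP (e a b)) => hab; [left|right]; move=> x y; rewrite inE => /eqP -> /yb ->.
- have [v vS] : exists v, v \in S by apply/set0Pn; rewrite -card_gt0 cS.
  have cS' : #|S :\ v| = n.+2 by move: (cardsD1 v S); rewrite vS cS add1n => -[].
  have p4' : P4free e (S :\ v).
    by move=> a b c d aS bS cS0 dS; apply: p4; apply: (subsetP (subsetDl S [set v])).
  have vS' : v \notin S :\ v by rewrite setD11.
  have ES : S = v |: (S :\ v) by rewrite setD1K.
  have [X' [XS X0 XnS [comp|anti]]] := IH _ cS' p4'.
  + have p4c : P4free (compl e) (v |: (S :\ v)) by rewrite -ES; apply: P4free_compl.
    have antic x y : x \in X' -> y \in (S :\ v) :\: X' -> ~~ compl e x y.
      by move=> xX yY; rewrite /compl negb_and negbK comp ?orbT.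
    have [X [XS2 X02 XnS2 hX]] := splits_add_vertex (compl_sym esym) vS' p4c XS X0 XnS antic.
    rewrite -ES in XS2 XnS2 hX; exists X; split => //.
    case: hX => hX; [right|left] => x y xX yY.
    * by move: (hX x y xX yY) => /andP [].
    * have xy : x != y by apply: contraTneq yY => <-; rewrite in_setD xX.
      by move: (hX x y xX yY); rewrite /compl xy /= negbK.
  + have p4S : P4free e (v |: (S :\ v)) by rewrite -ES.
    have [X hX] := splits_add_vertex esym vS' p4S XS X0 XnS anti.
    by exists X; rewrite ES.
Qed.

End Seinsche.

Section PrimeGraphs.
Variables (T : finType) (e : rel T).
Hypothesis esym : symmetric e.
Hypothesis prime : ~ has_homogeneous_set e.

Definition clone (H : {set T}) (y h : T) := forall u, u \in H -> u != h -> e y u = e h u.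

Definition cloneb (H : {set T}) (y h : T) := [forall u in H, (u != h) ==> (e y u == e h u)].

Lemma cloneP H y h : reflect (clone H y h) (cloneb H y h).
Proof.
apply: (iffP forall_inP) => c u uH.
- by move=> uh; move: (c u uH) => /implyP /(_ uh) /eqP.
- by apply/implyP => uh; apply/eqP; apply: c.
Qed.

Lemma card_lt_T (X : {set T}) t : t \notin X -> #|X| < #|T|.
Proof.
move=> tX; rewrite -(cardsC X).
suff : 0 < #|~: X| by lia.
by apply/card_gt0P; exists t; rewrite inE.
Qed.

Lemma mixed_outside (X : {set T}) t : 1 < #|X| -> t \notin X ->
  exists2 b, b \notin X & mixed e b X.
Proof.
move=> X2 tX.
have : ~~ homogeneous e X by apply/negP => hX; apply: prime; exists X.
rewrite /homogeneous X2 (card_lt_T tX) /= negb_forall => /existsP [b].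
by rewrite negb_imply negbK => /andP [bX mb]; exists b.
Qed.

(* If no outside vertex w distinguishes a clone x of h from h
   itself, then H is the whole vertex set: otherwise the set formed by h and
   its outside clones would be homogeneous. *)
Lemma prime_closure (H : {set T}) :
  1 < #|H| ->
  (forall y, y \notin H -> ~~ mixed e y H \/ exists2 h, h \in H & clone H y h) ->
  (forall h x w, h \in H -> x \notin H -> w \notin H -> clone H x h -> ~ clone H w h ->
     e w x != e w h -> False) ->
  forall t, t \in H.
Proof.
move=> H2 attach nobreak t; apply/negPn/negP => tH.
have [y yH my] := mixed_outside H2 tH.
case: (attach y yH) => [nmy|[h hH cyh]]; first by move: nmy; rewrite my.
pose M := h |: [set z | (z \notin H) && cloneb H z h].
have hM : h \in M by rewrite !inE eqxx.
have yM : y \in M by rewrite !inE yH /=; apply/orP; right; apply/cloneP.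
have yh : y != h by apply/eqP => yh; move: yH; rewrite yh hH.
have M2 : 1 < #|M|.
  apply: (@leq_trans #|[set h; y]|); first by rewrite cards2 eq_sym yh.
  by apply: subset_leq_card; apply/subsetP => z; rewrite in_set2 => /orP [/eqP-> | /eqP->].
have [u uH uh] : exists2 u, u \in H & u != h.
  move: H2; rewrite (cardD1 h) hH add1n ltnS => /card_gt0P [u]; rewrite !inE => /andP [uh uH].
  by exists u.
have uM : u \notin M by rewrite !inE negb_or uh uH.
have [w wM /andP [/exists_inP [a aM wa] /exists_inP [b bM wb]]] := mixed_outside M2 uM.
have cl z : z \in M -> z != h -> z \notin H /\ clone H z h.
  rewrite !inE => /orP [/eqP -> | /andP [zH /cloneP c]]; first by rewrite eqxx.
  by move=> _; split.
have wH : w \notin H.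
  apply/negP => wH.
  have wh : w != h by apply/eqP => wh; move: wM; rewrite wh hM.
  have same z : z \in M -> e w z = e w h.
    move=> zM; case: (eqVneq z h) => [-> // | zh].
    by case: (cl z zM zh) => _ /(_ w wH wh); rewrite esym (esym w h).
  by move: wb; rewrite (same b bM) -(same a aM) wa.
have ncw : ~ clone H w h by move=> /cloneP c; move: wM; rewrite !inE wH c orbT.
case: (boolP (e w h)) => wh.
- have bh : b != h by apply/eqP => bh; move: wb; rewrite bh wh.
  case: (cl b bM bh) => bH cb.
  by apply: (nobreak h b w) => //; rewrite (negbTE wb) wh.
- have ah : a != h by apply/eqP => ah; move: wa; rewrite ah (negbTE wh).
  case: (cl a aM ah) => aH ca.
  by apply: (nobreak h a w) => //; rewrite wa (negbTE wh).
Qed.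

(* A set that is complete or anticomplete to every vertex outside it and has
   at least two vertices cannot exist in a prime graph; hence no split of the
   whole vertex set exists either (take the part or its complement, whichever
   has two vertices). *)
Lemma prime_no_split (X : {set T}) : 2 < #|T| -> ~ splits e setT X.
Proof.
move=> T3 [_ X0 XT hX].
have nohom (Z : {set T}) t : 1 < #|Z| -> t \notin Z ->
   (forall b, b \notin Z -> (forall z, z \in Z -> e b z) \/ (forall z, z \in Z -> ~~ e b z)) -> False.
  move=> Z2 tZ H; apply: prime; exists Z; rewrite /homogeneous Z2 (card_lt_T tZ) /=.
  apply/forallP => b; apply/implyP => bZ; apply/negP => /andP [/exists_inP [y yZ hy] /exists_inP [z zZ hz]].
  by case: (H b bZ) => Hb; [rewrite Hb in hz | rewrite (negbTE (Hb y yZ)) in hy].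
have [x xX] : exists x, x \in X by apply/set0Pn.
have [t tX] : exists t, t \notin X.
  apply/existsP; rewrite -negb_forall; apply: contra XT => /forallP H.
  by apply/eqP/setP => u; rewrite inE H.
have mem b : b \notin X -> b \in setT :\: X by move=> bX; rewrite in_setD bX in_setT.
case: (leqP 2 #|X|) => X2.
- apply: (nohom X t X2 tX) => b bX.
  by case: hX => hX; [left|right] => z zX; rewrite esym; exact: hX zX (mem b bX).
- have X1 : 0 < #|X| by apply/card_gt0P; exists x.
  have cX : #|X| = 1 by lia.
  apply: (nohom (~: X) x); first by rewrite cardsCs setCK cX; lia.
  + by rewrite inE negbK.
  + move=> b; rewrite inE negbK => bX.
    by case: hX => hX; [left|right] => z; rewrite inE => zX; exact: hX bX (mem z zX).
Qed.

Lemma prime_has_P4 : 2 < #|T| ->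
  exists a b c d, [/\ e a b, e b c, e c d & [/\ ~~ e a c, ~~ e a d & ~~ e b d]].
Proof.
move=> T3.
case: (boolP [exists a, exists b, exists c, exists d,
   [&& e a b, e b c, e c d & [&& ~~ e a c, ~~ e a d & ~~ e b d]]]).
- move=> /existsP [a /existsP [b /existsP [c /existsP [d /and4P [h1 h2 h3 /and3P [h4 h5 h6]]]]]].
  by exists a, b, c, d.
- move=> none; exfalso.
  have p4 : P4free e setT.
    move=> a b c d _ _ _ _ h1 h2 h3 h4 h5 h6; move/negP: none; apply.
    apply/existsP; exists a; apply/existsP; exists b; apply/existsP; exists c; apply/existsP; exists d.
    by rewrite h1 h2 h3 h4 h5 h6.
  have cT : #|[set: T]| = (#|T| - 2).+2 by rewrite cardsT; lia.
  have [X hX] := seinsche esym cT p4.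
  exact: prime_no_split T3 hX.
Qed.

End PrimeGraphs.

(* Its vertices induce the half graph O_k. *)
Definition half_chain (T : finType) (e : rel T) k (A C : nat -> T) :=
  [/\ forall i j, 0 < i <= k -> 0 < j <= k -> e (A i) (C j) = (j <= i),
      forall i j, 0 < i <= k -> 0 < j <= k -> e (A i) (A j) = false &
      forall i j, 0 < i <= k -> 0 < j <= k -> e (C i) (C j) = false].

Definition chain_in (T : finType) (e : rel T) k := exists A C, half_chain e k A C.

Definition chain_set (T : finType) k (A C : nat -> T) : {set T} :=
  [set t | [exists i : 'I_k.+1, (0 < i) && ((t == A i) || (t == C i))]].

Lemma chain_setP (T : finType) k (A C : nat -> T) u :
  reflect (exists2 i, 0 < i <= k & (u = A i \/ u = C i)) (u \in chain_set k A C).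
Proof.
apply: (iffP idP).
- rewrite inE => /existsP [[i ilt] /= /andP [i0 /orP [/eqP h|/eqP h]]]; exists i; try lia; by [left|right].
- move=> [i ir h]; rewrite inE; apply/existsP; exists (inord i); rewrite inordK; last lia.
  by case: h => ->; rewrite eqxx ?orbT andbT; lia.
Qed.

Lemma range_cases k (f : nat -> bool) :
  (exists2 i, 0 < i <= k & f i) \/ (forall i, 0 < i <= k -> f i = false).
Proof.
case: (boolP [exists i : 'I_k.+1, (0 < i) && f i]) => [/existsP [[i ilt] /andP [i0 fi]]|none].
- by left; exists i => //; rewrite i0 -ltnS.
- right => i /andP [i0 ik]; apply/negbTE; apply: contra none => fi.
  by apply/existsP; exists (inord i); rewrite inordK ?i0 //; lia.
Qed.

Section Chains.
Variables (T : finType) (e : rel T).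
Hypothesis esym : symmetric e.
Hypothesis eirr : irreflexive e.
Hypothesis noP5 : ~ has_induced P5 e.
Hypothesis noH : ~ has_induced (compl P5) e.
Hypothesis noB : ~ has_induced bull e.
Hypothesis noC : ~ has_induced C5 e.
Hypothesis prime : ~ has_homogeneous_set e.

Lemma not_P5 v0 v1 v2 v3 v4 :
  e v0 v1 -> e v1 v2 -> e v2 v3 -> e v3 v4 ->
  ~~ e v0 v2 -> ~~ e v0 v3 -> ~~ e v0 v4 -> ~~ e v1 v3 -> ~~ e v1 v4 -> ~~ e v2 v4 -> False.
Proof. by move=> *; apply: noP5; apply: (P5_of esym eirr (v0 := v0) (v1 := v1) (v2 := v2) (v3 := v3) (v4 := v4)). Qed.

Lemma not_house c0 c1 c2 c3 c4 :
  e c0 c1 -> e c1 c2 -> e c2 c3 -> e c3 c4 -> e c4 c0 -> e c0 c2 ->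
  ~~ e c0 c3 -> ~~ e c1 c3 -> ~~ e c1 c4 -> ~~ e c2 c4 -> False.
Proof. by move=> *; apply: noH; apply: (house_of esym eirr (c0 := c0) (c1 := c1) (c2 := c2) (c3 := c3) (c4 := c4)). Qed.

Lemma not_bull t0 t1 t2 p0 p1 :
  e t0 t1 -> e t1 t2 -> e t0 t2 -> e t0 p0 -> e t1 p1 ->
  ~~ e t0 p1 -> ~~ e t1 p0 -> ~~ e t2 p0 -> ~~ e t2 p1 -> ~~ e p0 p1 -> False.
Proof. by move=> *; apply: noB; apply: (bull_of esym eirr (t0 := t0) (t1 := t1) (t2 := t2) (p0 := p0) (p1 := p1)). Qed.

Definition sees k (A C : nat -> T) (fa fc : nat -> bool) (x : T) :=
  (forall i, 0 < i <= k -> e x (A i) = fa i) /\ (forall i, 0 < i <= k -> e x (C i) = fc i).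

Definition attachment k A C x :=
  sees k A C (fun _ => false) (fun _ => false) x \/
  sees k A C (fun _ => true) (fun _ => true) x \/
  (exists2 m, 0 < m <= k & sees k A C (fun _ => false) (fun i => i <= m) x) \/
  (exists2 m, 0 < m <= k & sees k A C (fun i => i == m) (fun i => i <= m) x) \/
  (exists2 m, 0 < m <= k & sees k A C (fun i => m <= i) (fun _ => false) x) \/
  (exists2 m, 0 < m <= k & sees k A C (fun i => m <= i) (fun i => i == m) x).

Lemma sees_ext k A C fa fc fa' fc' x :
  (forall i, 0 < i <= k -> fa i = fa' i) -> (forall i, 0 < i <= k -> fc i = fc' i) ->
  sees k A C fa fc x -> sees k A C fa' fc' x.
Proof. by move=> ha hc [xa xc]; split => i ir; rewrite -?ha -?hc ?xa ?xc. Qed.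

Ltac adjacency_facts := repeat (match goal with
  | H : forall (i j : nat), _ -> _ -> @eq bool (e _ _) _ |- _ => progress rewrite H
  | H : forall (i : nat), _ -> @eq bool (e _ _) _ |- _ => progress rewrite H
  | H : @eq bool (e _ _) _ |- _ => progress rewrite H
  | H : is_true (e _ _) |- _ => progress rewrite H
  | H : is_true (~~ e _ _) |- _ => progress rewrite (negbTE H)
  end).
Ltac by_adjacency := first [ done
  | solve [ adjacency_facts; rewrite /=; lia ]
  | solve [ rewrite esym; adjacency_facts; rewrite /=; lia ] ].
Ltac by_insertion := move=> ? ?; adjacency_facts; rewrite /=; try (case: ifP => ?); lia.

Section Duality.
Variables (k : nat) (A C : nat -> T).
Hypothesis eAC : forall i j, 0 < i <= k -> 0 < j <= k -> e (A i) (C j) = (j <= i).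
Hypothesis eAA : forall i j, 0 < i <= k -> 0 < j <= k -> e (A i) (A j) = false.
Hypothesis eCC : forall i j, 0 < i <= k -> 0 < j <= k -> e (C i) (C j) = false.

Definition dualA (i : nat) := C (k.+1 - i).
Definition dualC (i : nat) := A (k.+1 - i).

Lemma dual_AC i j : 0 < i <= k -> 0 < j <= k -> e (dualA i) (dualC j) = (j <= i).
Proof. by move=> ir jr; rewrite /dualA /dualC esym eAC; lia. Qed.
Lemma dual_AA i j : 0 < i <= k -> 0 < j <= k -> e (dualA i) (dualA j) = false.
Proof. by move=> ir jr; rewrite /dualA eCC //; lia. Qed.
Lemma dual_CC i j : 0 < i <= k -> 0 < j <= k -> e (dualC i) (dualC j) = false.
Proof. by move=> ir jr; rewrite /dualC eAA //; lia. Qed.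

Lemma sees_dual fa fc x :
  sees k dualA dualC fa fc x -> sees k A C (fun j => fc (k.+1 - j)) (fun j => fa (k.+1 - j)) x.
Proof.
move=> [xa xc]; split => j jr.
- by rewrite -xc /dualC ?subKn //; lia.
- by rewrite -xa /dualA ?subKn //; lia.
Qed.

Lemma chain_set_dual : chain_set k dualA dualC = chain_set k A C.
Proof.
apply/setP => u; apply/chain_setP/chain_setP => -[i ir h]; exists (k.+1 - i); try lia.
- by rewrite /dualA /dualC in h; case: h; [right|left].
- by rewrite /dualA /dualC subKn; [case: h; [right|left] | lia].
Qed.

End Duality.

Section Attachment.
Variables (k : nat) (A C : nat -> T).
Hypothesis eAC : forall i j, 0 < i <= k -> 0 < j <= k -> e (A i) (C j) = (j <= i).
Hypothesis eAA : forall i j, 0 < i <= k -> 0 < j <= k -> e (A i) (A j) = false.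
Hypothesis eCC : forall i j, 0 < i <= k -> 0 < j <= k -> e (C i) (C j) = false.
Hypothesis k2 : 1 < k.

Lemma attach_no_A x : (forall i, 0 < i <= k -> e x (A i) = false) ->
  sees k A C (fun _ => false) (fun _ => false) x \/
  exists2 m, 0 < m <= k & sees k A C (fun _ => false) (fun i => i <= m) x.
Proof.
move=> xA.
have down q s : 0 < q -> q < s <= k -> e x (C s) -> e x (C q).
  move=> q0 qs xs; apply/negP => nq.
  by apply: (not_P5 (v0 := x) (v1 := C s) (v2 := A k) (v3 := C q) (v4 := A q)); by_adjacency.
case: (range_cases k (fun i => e x (C i))) => [[i ir xi] | none]; last by left.
right.
have ex : exists n, (0 < n <= k) && e x (C n) by exists i; rewrite ir xi.
have bnd n : (0 < n <= k) && e x (C n) -> n <= k by move=> /andP [] /andP [].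
case: (ex_maxnP ex bnd) => m /andP [/andP [m0 mk] xm] mmax.
exists m; first by rewrite m0.
split => // j /andP [j0 jk] /=.
case: (ltngtP j m) => [jm | mj | jm]; last by subst j; rewrite xm ?leqnn.
- by rewrite (down j m) // ?jm ?mk; lia.
- apply/negP => xj; have := mmax j; rewrite j0 jk xj /= => /(_ isT); lia.
Qed.

Lemma attach_misses_last x p : 0 < p <= k -> e x (A k) = false -> e x (A p) ->
  sees k A C (fun i => i == p) (fun i => i <= p) x.
Proof.
move=> pr xAk xp.
have below_k r : 0 < r <= k -> e x (A r) -> r < k.
  by move=> rr xr; case: (ltngtP r k) => // h; [lia | move: xr; rewrite h xAk].
have sees_C_below r : 0 < r <= k -> e x (A r) -> forall q, 0 < q <= r -> e x (C q).
  move=> rr xr q qr; apply/negP => nq; have rk := below_k r rr xr.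
  case: (boolP (e x (C k))) => xk.
  - by apply: noC; apply: (C5_of esym eirr (c0 := x) (c1 := A r) (c2 := C q) (c3 := A k) (c4 := C k)); by_adjacency.
  - by apply: (not_P5 (v0 := x) (v1 := A r) (v2 := C q) (v3 := A k) (v4 := C k)); by_adjacency.
have misses_C_above r : 0 < r <= k -> e x (A r) -> forall s, r < s <= k -> e x (C s) = false.
  move=> rr xr s sr; apply/negP => xs; have rk := below_k r rr xr.
  have x1 := sees_C_below r rr xr 1 ltac:(lia).
  by apply: (not_house (c0 := x) (c1 := A r) (c2 := C 1) (c3 := A k) (c4 := C s)); by_adjacency.
split => i ir /=.
- case: (eqVneq i p) => [->|ip]; first by rewrite xp.
  apply/negP => xi.
  case: (ltngtP i p) => [lt|gt|eq]; last by move: ip; rewrite eq eqxx.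
  + by move: (misses_C_above i ir xi p ltac:(lia)); rewrite (sees_C_below p pr xp p) //; lia.
  + by move: (misses_C_above p pr xp i ltac:(lia)); rewrite (sees_C_below i ir xi i) //; lia.
- case: (leqP i p) => ip; first by rewrite (sees_C_below p pr xp i) //; lia.
  by rewrite (misses_C_above p pr xp i) //; lia.
Qed.

Lemma attach_last_gap x p s : e x (A k) -> e x (C 1) -> 0 < p < k -> ~~ e x (A p) ->
  1 < s <= k -> ~~ e x (C s) -> False.
Proof.
move=> xk x1 pr np sr ns.
case: (leqP s p) => sp.
- by apply: (not_house (c0 := A k) (c1 := x) (c2 := C 1) (c3 := A p) (c4 := C s)); by_adjacency.
- by apply: (not_bull (t0 := C 1) (t1 := A k) (t2 := x) (p0 := A p) (p1 := C s)); by_adjacency.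
Qed.

Lemma attach_all_A x : (forall i, 0 < i <= k -> e x (A i)) -> e x (C 1) ->
  sees k A C (fun _ => true) (fun _ => true) x \/ sees k A C (fun _ => true) (fun i => i == 1) x.
Proof.
move=> xA x1.
have xA' i : 0 < i <= k -> e x (A i) = true by move/xA ->.
case: (range_cases k (fun s => (1 < s) && e x (C s))) => [[s sr /andP [s1 xs]] | none].
- left; split => // t tr; apply/negP => nt.
  case: (ltngtP t s) => [ts|st|eq]; last by move: nt; rewrite eq xs.
  + by apply: (not_house (c0 := x) (c1 := C s) (c2 := A k) (c3 := C t) (c4 := A t)); by_adjacency.
  + by apply: (not_bull (t0 := A t) (t1 := x) (t2 := C s) (p0 := C t) (p1 := A 1)); by_adjacency.
- right; split => // t tr /=.
  case: (eqVneq t 1) => [->|t1]; first by rewrite x1.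
  by have := none t tr; rewrite ltn_neqAle eq_sym t1; case/andP: tr => -> _ /=.
Qed.

End Attachment.

Section Classification.
Variables (k : nat) (A C : nat -> T).
Hypothesis eAC : forall i j, 0 < i <= k -> 0 < j <= k -> e (A i) (C j) = (j <= i).
Hypothesis eAA : forall i j, 0 < i <= k -> 0 < j <= k -> e (A i) (A j) = false.
Hypothesis eCC : forall i j, 0 < i <= k -> 0 < j <= k -> e (C i) (C j) = false.
Hypothesis k2 : 1 < k.

Let dAC := dual_AC eAC.
Let dAA := dual_AA eCC.
Let dCC := dual_CC eAA.

(* The
   cases without A-neighbours, without C-neighbours, missing A k, or missing
   C 1 are handled by the lemmas above, applied to the chain or to its dual. *)
Lemma attachment_holds x : attachment k A C x.
Proof.
case: (range_cases k (fun i => e x (A i))) => [[p pr xp] | xA].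
2: by case: (attach_no_A eAC eAA eCC k2 xA) => [h | [m mr h]]; [left | do 2 right; left; exists m].
case: (range_cases k (fun i => e x (C i))) => [[q qr xq] | xC].
2: { have xA' i : 0 < i <= k -> e x (dualA k C i) = false by move=> ir; rewrite /dualA xC //; lia.
     case: (attach_no_A dAC dAA dCC k2 xA') => [h | [m mr h]]; first by left; have := sees_dual h.
     do 4 right; left; exists (k.+1 - m); first lia.
     by apply: sees_ext (sees_dual h) => i ir //=; lia. }
case: (boolP (e x (A k))) => xAk.
2: { do 3 right; left; exists p => //.
     by apply: (attach_misses_last eAC eAA eCC k2) => //; exact: negbTE. }
case: (boolP (e x (C 1))) => x1.
2: { do 5 right; exists (k.+1 - (k.+1 - q)); first lia.
     have h := attach_misses_last dAC dAA dCC k2 (x := x) (p := k.+1 - q) ltac:(lia).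
     have h1 : e x (dualA k C k) = false by rewrite /dualA subSnn; exact: negbTE.
     have h2 : e x (dualA k C (k.+1 - q)) by rewrite /dualA subKn //; lia.
     by apply: sees_ext (sees_dual (h h1 h2)) => i ir /=; lia. }
case: (range_cases k (fun s => ~~ e x (C s))) => [[s sr ns] | allC].
- have s1 : 1 < s by case: (eqVneq s 1) => [e1|]; [move: ns; rewrite e1 x1 | lia].
  have xAll i : 0 < i <= k -> e x (A i).
    move=> ir; apply/negP => ni.
    case: (eqVneq i k) => ik; first by move: ni; rewrite ik xAk.
    by apply: (attach_last_gap eAC eAA eCC k2 (x := x) (p := i) (s := s)) => //; lia.
  case: (attach_all_A eAC eAA eCC k2 xAll x1) => h; first by right; left.
  do 5 right; exists 1; first lia.
  by apply: sees_ext h => i ir //=; lia.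
- have xA' i : 0 < i <= k -> e x (dualA k C i).
    by move=> ir; rewrite /dualA; apply/negbFE/allC; lia.
  have x1' : e x (dualC k A 1) by rewrite /dualC subn1.
  case: (attach_all_A dAC dAA dCC k2 xA' x1') => h; first by right; left; have := sees_dual h.
  do 3 right; left; exists k; first lia.
  by apply: sees_ext (sees_dual h) => i ir /=; lia.
Qed.

End Classification.

Lemma compl_chain3 (A C : nat -> T) :
  (forall i j, 0 < i <= 3 -> 0 < j <= 3 -> e (A i) (C j) = ~~ (j <= i)) ->
  (forall i j, 0 < i <= 3 -> 0 < j <= 3 -> e (A i) (A j) = (i != j)) ->
  (forall i j, 0 < i <= 3 -> 0 < j <= 3 -> e (C i) (C j) = (i != j)) ->
  half_chain (compl e) 3 A C.
Proof.
move=> eAC eAA eCC.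
have AC i j : 0 < i <= 3 -> 0 < j <= 3 -> j <= i -> A i != C j.
  move=> ir jr ji; apply/eqP => E.
  have h1 := eAA 1 i ltac:(lia) ir; have h2 := eAC 1 j ltac:(lia) jr.
  have h3 := eCC 1 j ltac:(lia) jr; have h4 := eAC i 1 ir ltac:(lia).
  have h5 := eAA 2 i ltac:(lia) ir; have h6 := eAC 2 j ltac:(lia) jr.
  rewrite E in h1 h4 h5; rewrite h2 in h1; rewrite esym h3 in h4; rewrite h6 in h5.
  lia.
split => i j ir jr; rewrite /compl.
- rewrite eAC // negbK; case: (leqP j i) => ji; last by rewrite andbF.
  by rewrite AC.
- by rewrite eAA //; case: (eqVneq i j) => [->|ij]; rewrite ?eqxx ?andbF.
- by rewrite eCC //; case: (eqVneq i j) => [->|ij]; rewrite ?eqxx ?andbF.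
Qed.

Lemma cochain3 u1 u2 u3 v1 v2 v3 :
  ~~ e u1 v1 -> e u1 v2 -> e u1 v3 -> ~~ e u2 v1 -> ~~ e u2 v2 -> e u2 v3 ->
  ~~ e u3 v1 -> ~~ e u3 v2 -> ~~ e u3 v3 ->
  e u1 u2 -> e u1 u3 -> e u2 u3 -> e v1 v2 -> e v1 v3 -> e v2 v3 ->
  chain_in (compl e) 3.
Proof.
move=> *.
exists (fun i => if i == 1 then u1 else if i == 2 then u2 else u3).
exists (fun i => if i == 1 then v1 else if i == 2 then v2 else v3).
by apply: compl_chain3; move=> [|[|[|[|i]]]] [|[|[|[|j]]]] // _ _ /=; rewrite ?eirr //;
  first [ done | exact: negbTE | by rewrite esym | by rewrite esym; apply: negbTE ].
Qed.

Section Growth.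
Variables (k : nat) (A C : nat -> T).
Hypothesis eAC : forall i j, 0 < i <= k -> 0 < j <= k -> e (A i) (C j) = (j <= i).
Hypothesis eAA : forall i j, 0 < i <= k -> 0 < j <= k -> e (A i) (A j) = false.
Hypothesis eCC : forall i j, 0 < i <= k -> 0 < j <= k -> e (C i) (C j) = false.
Hypothesis k2 : 1 < k.

Lemma chain_AA_neq i j : 0 < i <= k -> 0 < j <= k -> i != j -> A i != A j.
Proof.
move=> ir jr ij; apply/eqP => h.
case: (ltngtP i j) => [lt|gt|eq]; last by move: ij; rewrite eq eqxx.
- by move: (eAC jr jr); rewrite -h eAC //; lia.
- by move: (eAC ir ir); rewrite h eAC //; lia.
Qed.

Lemma chain_CC_neq i j : 0 < i <= k -> 0 < j <= k -> i != j -> C i != C j.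
Proof.
move=> ir jr ij; apply/eqP => h.
case: (ltngtP i j) => [lt|gt|eq]; last by move: ij; rewrite eq eqxx.
- by move: (eAC ir ir); rewrite h eAC //; lia.
- by move: (eAC jr jr); rewrite -h eAC //; lia.
Qed.

Lemma chain_AC_neq i j : 0 < i <= k -> 0 < j <= k -> A i != C j.
Proof.
move=> ir jr; apply/eqP => h.
by move: (eAC ir (ltac:(lia) : 0 < 1 <= k)); rewrite h eCC //; lia.
Qed.

Lemma chain_insert q r x w : 0 < q <= k.+1 -> q <= r <= q.+1 -> r <= k.+1 ->
  (forall j, 0 < j <= k -> e x (C j) = (if j < r then j <= q else j.+1 <= q)) ->
  (forall i, 0 < i <= k -> e x (A i) = false) ->
  (forall i, 0 < i <= k -> e w (A i) = (if i < q then r <= i else r <= i.+1)) ->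
  (forall j, 0 < j <= k -> e w (C j) = false) ->
  e x w = (r <= q) ->
  chain_in e k.+1.
Proof.
move=> qr qrr rr xC xA wA wC xw.
exists (fun i => if i < q then A i else if i == q then x else A i.-1).
exists (fun j => if j < r then C j else if j == r then w else C j.-1).
split => i j ir jr /=.
- case: (ltngtP i q) => hi; case: (ltngtP j r) => hj /=;
  first [ rewrite eAC; lia | rewrite xC; [case: ifP => ?|]; lia | rewrite xw; lia
        | rewrite esym wA; [case: ifP => ?|]; lia ].
- case: (ltngtP i q) => hi; case: (ltngtP j q) => hj /=;
  first [ rewrite eAA; lia | rewrite xA; lia | rewrite esym xA; lia | by rewrite eirr ].
- case: (ltngtP i r) => hi; case: (ltngtP j r) => hj /=;
  first [ rewrite eCC; lia | rewrite wC; lia | rewrite esym wC; lia | by rewrite eirr ].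
Qed.

Lemma grows_from_adjacent_clone m x w : 0 < m <= k ->
  (forall i, 0 < i <= k -> e x (C i) = (i <= m)) ->
  (forall i, 0 < i <= k -> e x (A i) = (i == m)) ->
  attachment k A C w ->
  ~ ((forall i, 0 < i <= k -> i != m -> e w (A i) = false) /\
     (forall i, 0 < i <= k -> e w (C i) = (i <= m))) ->
  e x w = ~~ e w (A m) ->
  chain_in (compl e) k.+1.
Proof.
move=> mr xC xA wall ncl xw.
case: wall => [[wA wC]|[[wA wC]|[[p pr [wA wC]]|[[p pr [wA wC]]|[[p pr [wA wC]]|[p pr [wA wC]]]]]]].
- (* w sees nothing *)
  have [H|H] : (m < k) \/ (m = k) by lia.
  + exfalso; apply: (not_P5 (v0 := C k) (v1 := A k) (v2 := C 1) (v3 := x) (v4 := w)); by_adjacency.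
  + exfalso; apply: (not_bull (t0 := C 1) (t1 := x) (t2 := A m) (p0 := A 1) (p1 := w)); by_adjacency.
- (* w sees everything *)
  have [H|H] : (m = 1) \/ (m > 1) by lia.
  + have [kk|kk] : k = 2 \/ 2 < k by lia.
    { rewrite kk; apply: (cochain3 (u1 := C 1) (u2 := A 1) (u3 := x) (v1 := C 2) (v2 := A 2) (v3 := w)); by_adjacency. }
    exfalso; apply: (not_bull (t0 := C 1) (t1 := w) (t2 := A (m + 1)) (p0 := x) (p1 := C k)); by_adjacency.
  + exfalso; apply: (not_house (c0 := C 1) (c1 := A 1) (c2 := w) (c3 := C m) (c4 := x)); by_adjacency.
- (* w sees C 1..C p only *)
  have [H|[H|H]] : (p < m) \/ (p > m) \/ (p = m) by lia.
  + exfalso; apply: (not_bull (t0 := C 1) (t1 := x) (t2 := w) (p0 := A 1) (p1 := C m)); by_adjacency.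
  + exfalso; apply: (not_house (c0 := C 1) (c1 := x) (c2 := w) (c3 := C (m + 1)) (c4 := A k)); by_adjacency.
  + exfalso; apply: ncl; split => [i ir im | i ir]; adjacency_facts; rewrite /=; lia.
- (* w sees A p and C 1..C p *)
  have [H|[H|[H|[H|[H|[H|H]]]]]] : (p < m /\ p > 1) \/ (p < m /\ p = 1 /\ m < k) \/ (p < m /\ p = 1 /\ m = k) \/ (p= m + 1 /\ m > 1) \/ (p= m + 1 /\ m = 1) \/ (p > m + 1) \/ (p = m) by lia.
  + exfalso; apply: (not_bull (t0 := C 1) (t1 := x) (t2 := w) (p0 := A 1) (p1 := C m)); by_adjacency.
  + exfalso; apply: (not_P5 (v0 := A 1) (v1 := w) (v2 := x) (v3 := C m) (v4 := A k)); by_adjacency.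
  + have [kk|kk] : k = 2 \/ 2 < k by lia.
    { rewrite kk; apply: (cochain3 (u1 := C 1) (u2 := w) (u3 := A 1) (v1 := C 2) (v2 := A 2) (v3 := x)); by_adjacency. }
    exfalso; apply: (not_P5 (v0 := A 1) (v1 := w) (v2 := x) (v3 := C (m - 1)) (v4 := A (m - 1))); by_adjacency.
  + exfalso; apply: (not_bull (t0 := C 1) (t1 := w) (t2 := x) (p0 := A 1) (p1 := C (m + 1))); by_adjacency.
  + have [kk|kk] : k = 2 \/ 2 < k by lia.
    { rewrite kk; apply: (cochain3 (u1 := C 1) (u2 := x) (u3 := A 1) (v1 := C 2) (v2 := A 2) (v3 := w)); by_adjacency. }
    exfalso; apply: (not_P5 (v0 := A 1) (v1 := x) (v2 := w) (v3 := C (m + 1)) (v4 := A k)); by_adjacency.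
  + exfalso; apply: (not_house (c0 := C 1) (c1 := x) (c2 := w) (c3 := C (m + 1)) (c4 := A (m + 1))); by_adjacency.
  + exfalso; apply: ncl; split => [i ir im | i ir]; adjacency_facts; rewrite /=; lia.
- (* w sees A p..A k only *)
  have [H|[H|[H|H]]] : (p < m) \/ (p = m /\ m > 1) \/ (p = m /\ m = 1) \/ (p > m) by lia.
  + exfalso; apply: (not_house (c0 := C 1) (c1 := x) (c2 := A m) (c3 := w) (c4 := A (m - 1))); by_adjacency.
  + exfalso; apply: (not_bull (t0 := C 1) (t1 := A m) (t2 := x) (p0 := A 1) (p1 := w)); by_adjacency.
  + exfalso; apply: (not_house (c0 := A 1) (c1 := x) (c2 := C 1) (c3 := A k) (c4 := w)); by_adjacency.
  + exfalso; apply: (not_house (c0 := C 1) (c1 := A m) (c2 := x) (c3 := w) (c4 := A k)); by_adjacency.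
- (* w sees A p..A k and C p *)
  have [H|[H|[H|[H|[H|H]]]]] : (p < m /\ p > 1) \/ (p < m /\ p = 1 /\ m < k) \/ (p < m /\ p = 1 /\ m = k) \/ (p = m /\ m > 1) \/ (p = m /\ m = 1) \/ (p > m) by lia.
  + exfalso; apply: (not_bull (t0 := C 1) (t1 := A m) (t2 := x) (p0 := A 1) (p1 := w)); by_adjacency.
  + exfalso; apply: (not_P5 (v0 := A 1) (v1 := w) (v2 := A k) (v3 := C m) (v4 := x)); by_adjacency.
  + have [kk|kk] : k = 2 \/ 2 < k by lia.
    { rewrite kk; apply: (cochain3 (u1 := A 2) (u2 := x) (u3 := C 2) (v1 := A 1) (v2 := w) (v3 := C 1)); by_adjacency. }
    exfalso; apply: (not_P5 (v0 := A 1) (v1 := w) (v2 := A (m - 1)) (v3 := C (m - 1)) (v4 := x)); by_adjacency.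
  + exfalso; apply: (not_bull (t0 := C 1) (t1 := A m) (t2 := x) (p0 := A 1) (p1 := w)); by_adjacency.
  + exfalso; apply: (not_P5 (v0 := C k) (v1 := A k) (v2 := w) (v3 := A 1) (v4 := x)); by_adjacency.
  + exfalso; apply: (not_house (c0 := C 1) (c1 := A m) (c2 := x) (c3 := w) (c4 := A k)); by_adjacency.
Qed.

Lemma grows_from_nonadjacent_clone m x w : 0 < m <= k ->
  (forall i, 0 < i <= k -> e x (C i) = (i <= m)) ->
  (forall i, 0 < i <= k -> e x (A i) = false) ->
  attachment k A C w ->
  ~ ((forall i, 0 < i <= k -> i != m -> e w (A i) = false) /\
     (forall i, 0 < i <= k -> e w (C i) = (i <= m))) ->
  e x w = ~~ e w (A m) ->
  chain_in e k.+1.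
Proof.
move=> mr xC xA wall ncl xw.
case: wall => [[wA wC]|[[wA wC]|[[p pr [wA wC]]|[[p pr [wA wC]]|[[p pr [wA wC]]|[p pr [wA wC]]]]]]].
- (* w sees nothing *)
  have [H|H] : (m < k) \/ (m = k) by lia.
  + exfalso; apply: (not_P5 (v0 := C k) (v1 := A k) (v2 := C 1) (v3 := x) (v4 := w)); by_adjacency.
  + apply: (chain_insert (q := k + 1) (r := k + 1) (x := x) (w := w)); [lia|lia|lia|by_insertion|by_insertion|by_insertion|by_insertion|adjacency_facts; rewrite /=; lia].
- (* w sees everything *)
  have [H|H] : (m < k) \/ (m = k) by lia.
  + exfalso; apply: (not_bull (t0 := C 1) (t1 := w) (t2 := A 1) (p0 := x) (p1 := C k)); by_adjacency.
  + exfalso; apply: (not_house (c0 := C 1) (c1 := A 1) (c2 := w) (c3 := C m) (c4 := x)); by_adjacency.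
- (* w sees C 1..C p only *)
  have [H|[H|H]] : (p < m) \/ (p > m) \/ (p = m) by lia.
  + exfalso; apply: (not_bull (t0 := C 1) (t1 := x) (t2 := w) (p0 := A 1) (p1 := C m)); by_adjacency.
  + exfalso; apply: (not_bull (t0 := C 1) (t1 := w) (t2 := x) (p0 := A 1) (p1 := C (m + 1))); by_adjacency.
  + exfalso; apply: ncl; split => [i ir im | i ir]; adjacency_facts; rewrite /=; lia.
- (* w sees A p and C 1..C p *)
  have [H|[H|H]] : (p < m) \/ (p > m) \/ (p = m) by lia.
  + exfalso; apply: (not_house (c0 := C 1) (c1 := w) (c2 := x) (c3 := C m) (c4 := A k)); by_adjacency.
  + exfalso; apply: (not_bull (t0 := C 1) (t1 := w) (t2 := x) (p0 := A 1) (p1 := C (m + 1))); by_adjacency.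
  + exfalso; apply: ncl; split => [i ir im | i ir]; adjacency_facts; rewrite /=; lia.
- (* w sees A p..A k only *)
  have [H|[H|[H|H]]] : (p < m) \/ (p = m) \/ (p= m + 1) \/ (p > m + 1) by lia.
  + exfalso; apply: (not_P5 (v0 := C m) (v1 := x) (v2 := C 1) (v3 := A (m - 1)) (v4 := w)); by_adjacency.
  + apply: (chain_insert (q := m) (r := m + 1) (x := x) (w := w)); [lia|lia|lia|by_insertion|by_insertion|by_insertion|by_insertion|adjacency_facts; rewrite /=; lia].
  + apply: (chain_insert (q := m + 1) (r := m + 1) (x := x) (w := w)); [lia|lia|lia|by_insertion|by_insertion|by_insertion|by_insertion|adjacency_facts; rewrite /=; lia].
  + exfalso; apply: (not_P5 (v0 := C (m + 1)) (v1 := A (m + 1)) (v2 := C 1) (v3 := x) (v4 := w)); by_adjacency.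
- (* w sees A p..A k and C p *)
  have [H|[H|[H|H]]] : (p < m) \/ (p = m /\ m < k) \/ (p = m /\ m = k) \/ (p > m) by lia.
  + exfalso; apply: (not_P5 (v0 := A (m - 1)) (v1 := w) (v2 := A k) (v3 := C m) (v4 := x)); by_adjacency.
  + exfalso; apply: (not_bull (t0 := C m) (t1 := A (m + 1)) (t2 := w) (p0 := x) (p1 := C (m + 1))); by_adjacency.
  + exfalso; apply: (not_house (c0 := A m) (c1 := w) (c2 := C m) (c3 := x) (c4 := C (m - 1))); by_adjacency.
  + exfalso; apply: (not_P5 (v0 := A 1) (v1 := C 1) (v2 := x) (v3 := w) (v4 := C p)); by_adjacency.
Qed.

Lemma chain_grows_from_breaker m x w : 0 < m <= k ->
  clone e (chain_set k A C) x (A m) -> ~ clone e (chain_set k A C) w (A m) ->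
  e w x != e w (A m) -> chain_in e k.+1 \/ chain_in (compl e) k.+1.
Proof.
move=> mr cx ncw wx.
have inA i : 0 < i <= k -> A i \in chain_set k A C by move=> ir; apply/chain_setP; exists i => //; left.
have inC i : 0 < i <= k -> C i \in chain_set k A C by move=> ir; apply/chain_setP; exists i => //; right.
have xC i : 0 < i <= k -> e x (C i) = (i <= m).
  by move=> ir; rewrite cx ?inC ?eAC // eq_sym chain_AC_neq.
have xA i : 0 < i <= k -> i != m -> e x (A i) = false.
  by move=> ir im; rewrite cx ?inA ?eAA // chain_AA_neq.
have ncl : ~ ((forall i, 0 < i <= k -> i != m -> e w (A i) = false) /\
              (forall i, 0 < i <= k -> e w (C i) = (i <= m))).
  move=> [wA wC]; apply: ncw => u /chain_setP [i ir [->|->]] uh.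
  + have im : i != m by apply: contraNneq uh => ->.
    by rewrite wA // eAA.
  + by rewrite wC // eAC.
have xw : e x w = ~~ e w (A m) by rewrite esym; move: wx; case: (e w x); case: (e w (A m)).
have wall := attachment_holds eAC eAA eCC k2 w.
case: (boolP (e x (A m))) => xam.
- right; apply: (grows_from_adjacent_clone mr xC _ wall ncl xw) => i ir.
  by case: (eqVneq i m) => [->|im]; last rewrite xA.
- left; apply: (grows_from_nonadjacent_clone mr xC _ wall ncl xw) => i ir.
  by case: (eqVneq i m) => [->|im]; [exact: negbTE | rewrite xA].
Qed.

Lemma attachment_clone y :
  ~~ mixed e y (chain_set k A C) \/ exists2 h, h \in chain_set k A C & clone e (chain_set k A C) y h.
Proof.
have inA i : 0 < i <= k -> A i \in chain_set k A C by move=> ir; apply/chain_setP; exists i => //; left.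
have inC i : 0 < i <= k -> C i \in chain_set k A C by move=> ir; apply/chain_setP; exists i => //; right.
case: (attachment_holds eAC eAA eCC k2 y) =>
  [[yA yC]|[[yA yC]|[[m mr [yA yC]]|[[m mr [yA yC]]|[[m mr [yA yC]]|[m mr [yA yC]]]]]]].
- by left; apply/negP => /andP [/exists_inP [u /chain_setP [i ir [->|->]]]]; rewrite ?yA ?yC.
- by left; apply/negP => /andP [_ /exists_inP [u /chain_setP [i ir [->|->]]]]; rewrite ?yA ?yC.
- right; exists (A m); first exact: inA.
  by move=> u /chain_setP [i ir [->|->]] uh /=; rewrite ?yA ?yC ?eAA ?eAC.
- right; exists (A m); first exact: inA.
  move=> u /chain_setP [i ir [->|->]] uh /=; rewrite ?yA ?yC ?eAA ?eAC //.
  by apply/negbTE; apply: contraNneq uh => ->.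
- right; exists (C m); first exact: inC.
  by move=> u /chain_setP [i ir [->|->]] uh /=; rewrite ?yA ?yC ?eCC ?(esym (C m)) ?eAC.
- right; exists (C m); first exact: inC.
  move=> u /chain_setP [i ir [->|->]] uh /=; rewrite ?yA ?yC ?eCC ?(esym (C m)) ?eAC //.
  by apply/negbTE; apply: contraNneq uh => ->.
Qed.

End Growth.

Lemma chain_spans k A C : 1 < k -> half_chain e k A C ->
  ~ chain_in e k.+1 -> ~ chain_in (compl e) k.+1 -> forall t, t \in chain_set k A C.
Proof.
move=> k2 [eAC eAA eCC] nG nGc.
have no_growth : chain_in e k.+1 \/ chain_in (compl e) k.+1 -> False by case.
apply: (prime_closure esym prime).
- have r1 : 0 < 1 <= k by lia.
  apply: (@leq_trans #|[set A 1; C 1]|); first by rewrite cards2 (chain_AC_neq eAC eCC k2 r1 r1).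
  apply: subset_leq_card; apply/subsetP => z; rewrite in_set2 => /orP [/eqP->|/eqP->];
    apply/chain_setP; exists 1 => //; by [left|right].
- by move=> y _; apply: (attachment_clone eAC eAA eCC k2).
- move=> h x w /chain_setP [m mr [->|->]] _ _ cx ncw wx; apply: no_growth.
  + exact: (chain_grows_from_breaker eAC eAA eCC k2 mr cx ncw wx).
  + have mr' : 0 < k.+1 - m <= k by lia.
    have hm : C m = dualA k C (k.+1 - m) by rewrite /dualA subKn //; lia.
    rewrite hm -(chain_set_dual k A C) in cx ncw; rewrite hm in wx.
    exact: (chain_grows_from_breaker (dual_AC eAC) (dual_AA eCC) (dual_CC eAA) k2 mr' cx ncw wx).
Qed.

Definition half_map k (A C : nat -> T) (u : 'I_k + 'I_k) : T :=
  match u with inl i => A i.+1 | inr j => C (k - j) end.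

Lemma half_map_adj k A C : half_chain e k A C ->
  forall u v : 'I_k + 'I_k, e (half_map A C u) (half_map A C v) = half_rel u v.
Proof.
move=> [eAC eAA eCC] [i|i] [j|j] /=; have := ltn_ord i; have := ltn_ord j => ij ii.
- by rewrite eAA //; lia.
- by rewrite eAC; lia.
- by rewrite esym eAC; lia.
- by rewrite eCC //; lia.
Qed.

Lemma half_map_inj k A C : 1 < k -> half_chain e k A C -> injective (@half_map k A C).
Proof.
move=> k2 [eAC eAA eCC] [i|i] [j|j] /= h; have := ltn_ord i; have := ltn_ord j => ij ii.
- case: (eqVneq i j) => [->//|ne]; exfalso; move: h; apply/eqP.
  by apply: (chain_AA_neq eAC k2); [lia|lia|rewrite eqSS].
- by move/eqP: h; rewrite (negbTE (chain_AC_neq eAC eCC k2 (i := i.+1) (j := k - j) ltac:(lia) ltac:(lia))).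
- by move/eqP: h; rewrite eq_sym (negbTE (chain_AC_neq eAC eCC k2 (i := j.+1) (j := k - i) ltac:(lia) ltac:(lia))).
- case: (eqVneq i j) => [->//|ne]; exfalso; move: h; apply/eqP.
  apply: (chain_CC_neq eAC k2); [lia|lia|]; move: ne; apply: contra => /eqP h; apply/eqP/val_inj => /=; lia.
Qed.

Lemma half_chain_card k A C : 1 < k -> half_chain e k A C -> k + k <= #|T|.
Proof.
move=> k2 he; have := leq_card _ (half_map_inj k2 he).
by rewrite card_sum card_ord.
Qed.

Lemma half_chain_iso k A C : 1 < k -> half_chain e k A C -> (forall t, t \in chain_set k A C) ->
  isomorphic e (@half_rel k).
Proof.
move=> k2 he cov.
have finj := half_map_inj k2 he.
have [g fg gf] : bijective (@half_map k A C).
  apply: (inj_card_bij finj); rewrite -(card_codom finj).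
  apply/subset_leq_card/subsetP => t _; apply/codomP.
  move/chain_setP: (cov t) => [i ir [->|->]].
  + by exists (inl (Ordinal (n := k) (m := i.-1) ltac:(lia))) => /=; congr A; lia.
  + by exists (inr (Ordinal (n := k) (m := k - i) ltac:(lia))) => /=; congr C; lia.
exists g; split; first by exists (@half_map k A C).
by move=> x y; rewrite -(half_map_adj he) !gf.
Qed.

End Chains.

(* Small graphs on 0..n-1, given by adjacency functions on nat, are
   tabulated as boolean matrices and searched by computation. *)
Definition adj (M : seq (seq bool)) (i j : nat) : bool := nth false (nth [::] M i) j.

Definition adj_matrix n (g : nat -> nat -> bool) : seq (seq bool) := mkseq (fun i => mkseq (g i) n) n.

Lemma size_adj_matrix n g : size (adj_matrix n g) = n.
Proof. by rewrite size_mkseq. Qed.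

Lemma adj_matrixE n g i j : i < n -> j < n -> adj (adj_matrix n g) i j = g i j.
Proof. by move=> ilt jlt; rewrite /adj nth_mkseq // nth_mkseq. Qed.

(* contains5 M h searches the graph M for distinct vertices v0, ..., v4
   such that v_i and v_j are adjacent exactly when h i j, for i < j < 5.
   The pattern values are computed once, and a partial choice is abandoned
   as soon as it fails. *)
Definition contains5 (M : seq (seq bool)) (h : nat -> nat -> bool) : bool :=
  let V := iota 0 (size M) in
  let h01 := h 0 1 in let h02 := h 0 2 in let h12 := h 1 2 in let h03 := h 0 3 in
  let h13 := h 1 3 in let h23 := h 2 3 in let h04 := h 0 4 in let h14 := h 1 4 in
  let h24 := h 2 4 in let h34 := h 3 4 in
  has (fun a => let ga := nth [::] M a in let Va := rem a V in
  has (fun b => let gb := nth [::] M b in let Vb := rem b Va in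
    (nth false ga b == h01) &&
  has (fun c => let gc := nth [::] M c in let Vc := rem c Vb in
    [&& nth false ga c == h02, nth false gb c == h12 &
  has (fun d => let gd := nth [::] M d in
    [&& nth false ga d == h03, nth false gb d == h13, nth false gc d == h23 &
  has (fun f =>
    [&& nth false ga f == h04, nth false gb f == h14, nth false gc f == h24 & nth false gd f == h34])
  (rem d Vc)]) Vc]) Vb) Va) V.

Lemma contains5_sound M h : contains5 M h ->
  exists v : nat -> nat, (forall i, v i < size M) /\
    forall i j, i < j < 5 -> adj M (v i) (v j) = h i j.
Proof.
have inV (s : seq nat) x y : x \in rem y s -> x \in s by move/(mem_rem (s := s)).
case/hasP => a aV /hasP [b /inV bV /andP [/eqP hab /hasP [c /inV /inV cV /and3P [/eqP hac /eqP hbc]]]].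
case/hasP => d /inV /inV /inV dV /and4P [/eqP had /eqP hbd /eqP hcd /hasP [f /inV /inV /inV /inV fV]].
case/and4P => /eqP haf /eqP hbf /eqP hcf /eqP hdf.
exists (fun i => nth f [:: a; b; c; d] i); split.
- have lt x : x \in iota 0 (size M) -> x < size M by rewrite mem_iota.
  by case=> [|[|[|[|i]]]] /=; rewrite ?nth_nil; apply: lt.
- by case=> [|[|[|[|[|i]]]]] [|[|[|[|[|j]]]]] //= H; rewrite /adj //; exfalso; clear - H; lia.
Qed.

Definition on_nat (H : rel 'I_5) (i j : nat) : bool := H (nth ord0 ord5 i) (nth ord0 ord5 j).

Lemma nth_ord5 (i : 'I_5) : nth ord0 ord5 i = i.
Proof. by apply: val_inj; rewrite val_ord5. Qed.

Definition forbidden (M : seq (seq bool)) : bool :=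
  [|| contains5 M (on_nat P5), contains5 M (on_nat (compl P5)) | contains5 M (on_nat bull)].

Definition extend (g : nat -> nat -> bool) (n : nat) (b : nat -> bool) (i j : nat) : bool :=
  if i == n then (j < n) && b j else if j == n then (i < n) && b i else g i j.

Section Realization.
Variables (T : finType) (e : rel T).
Hypothesis esym : symmetric e.
Hypothesis eirr : irreflexive e.

Definition realizes (u : nat -> T) n (g : nat -> nat -> bool) :=
  forall i j, i < n -> j < n -> e (u i) (u j) = g i j.

Lemma realizes_extend u n g x (b : nat -> bool) :
  realizes u n g -> (forall j, j < n -> e x (u j) = b j) ->
  realizes (fun i => if i == n then x else u i) n.+1 (extend g n b).
Proof.
move=> ug xb i j; rewrite !ltnS /extend.
case: (eqVneq i n) => [->|ni]; case: (eqVneq j n) => [->|nj] ilt jlt.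
- by rewrite eirr ltnn.
- by rewrite xb ?andTb //; lia.
- by rewrite esym xb ?andTb //; lia.
- by rewrite ug //; lia.
Qed.

Lemma contains5_induced (H : rel 'I_5) u n g :
  symmetric H -> irreflexive H -> twinfree H -> realizes u n g ->
  contains5 (adj_matrix n g) (on_nat H) -> has_induced H e.
Proof.
move=> Hsym Hirr Htw ug /contains5_sound [v []]; rewrite size_adj_matrix => vn vH.
have lt (i j : 'I_5) : i < j -> e (u (v i)) (u (v j)) = H i j.
  by move=> ij; rewrite ug // -(@adj_matrixE n) // vH /on_nat ?nth_ord5 // ij ltn_ord.
apply: (induced_from_hom eirr (f := fun i : 'I_5 => u (v i))) => // i j.
case: (ltngtP i j) => [ij | ji | /val_inj ->]; first exact: lt.
- by rewrite esym Hsym; apply: lt.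
- by rewrite eirr Hirr.
Qed.

Hypothesis noP5 : ~ has_induced P5 e.
Hypothesis noH : ~ has_induced (compl P5) e.
Hypothesis noB : ~ has_induced bull e.

Lemma not_forbidden u n g : realizes u n g -> ~~ forbidden (adj_matrix n g).
Proof.
move=> ug; apply/negP => /or3P [h|h|h].
- by apply: noP5; apply: (contains5_induced _ _ twinfree_P5 ug h); pattern_cases.
- by apply: noH; apply: (contains5_induced _ _ twinfree_house ug h); pattern_cases.
- by apply: noB; apply: (contains5_induced _ _ twinfree_bull ug h); pattern_cases.
Qed.

End Realization.

Definition c5 : nat -> nat -> bool := on_nat C5.
Definition cycle_plus (s : seq bool) := extend c5 5 (nth false s).
Definition cycle_plus2 (sx sw : seq bool) (t : bool) :=
  extend (cycle_plus sx) 6 (fun j => if j == 5 then t else nth false sw j).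

Fixpoint bitseqs n : seq (seq bool) :=
  if n is n'.+1 then [seq b :: s | b <- [:: true; false], s <- bitseqs n'] else [:: [::]].

Lemma bitseqsP (s : seq bool) : s \in bitseqs (size s).
Proof.
elim: s => [|b s IH] //.
by apply: (@allpairs_f _ _ _ cons); first case: b.
Qed.

Definition clone_pattern h (s : seq bool) : bool :=
  all (fun j => (j == h) || (nth false s j == c5 h j)) (iota 0 5).

(* A vertex outside a C5 that creates no forbidden subgraph sees none or all
   of the cycle, or is a clone of a cycle vertex. *)
Lemma one_vertex_table :
  all (fun s => [|| s == nseq 5 false, s == nseq 5 true, has (clone_pattern^~ s) (iota 0 5)
                  | forbidden (adj_matrix 6 (cycle_plus s))]) (bitseqs 5).
Proof. by vm_compute. Qed.

(* A clone x of the cycle vertex h, and a vertex w that is not such a clone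
   but distinguishes x from h, always create a forbidden subgraph. *)
Lemma two_vertex_table :
  all (fun h => all (fun sx => all (fun sw => all (fun t =>
        [|| t == nth false sw h, clone_pattern h sw | forbidden (adj_matrix 7 (cycle_plus2 sx sw t))])
      [:: true; false]) (bitseqs 5)) (filter (clone_pattern h) (bitseqs 5))) (iota 0 5).
Proof. by vm_compute. Qed.

Section Cycle.
Variables (T : finType) (e : rel T).
Hypothesis esym : symmetric e.
Hypothesis eirr : irreflexive e.
Hypothesis noP5 : ~ has_induced P5 e.
Hypothesis noH : ~ has_induced (compl P5) e.
Hypothesis noB : ~ has_induced bull e.

Variable u : nat -> T.
Hypothesis uc : realizes e u 5 c5.
Hypothesis uinj : forall i j, i < 5 -> j < 5 -> u i = u j -> i = j.

Definition cycle_pattern y : seq bool := [seq e y (u j) | j <- iota 0 5].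

Lemma cycle_patternE y j : j < 5 -> nth false (cycle_pattern y) j = e y (u j).
Proof. by move=> j5; rewrite (nth_map 0) ?size_iota ?nth_iota. Qed.

Lemma realizes_cycle_plus y : realizes e (fun i => if i == 5 then y else u i) 6 (cycle_plus (cycle_pattern y)).
Proof. by apply: realizes_extend => // j j5; rewrite cycle_patternE. Qed.

Lemma clone_patternP h y : h < 5 ->
  reflect (forall j, j < 5 -> j != h -> e y (u j) = e (u h) (u j)) (clone_pattern h (cycle_pattern y)).
Proof.
move=> h5; apply: (iffP allP) => [cl j j5 jh | cl j].
- by move: (cl j); rewrite mem_iota (negbTE jh) cycle_patternE // uc // => /(_ j5) /eqP.
- rewrite mem_iota => /= j5; case: (eqVneq j h) => //= jh.
  by rewrite cycle_patternE // cl // uc.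
Qed.

Lemma cycle_pattern_in y : cycle_pattern y \in bitseqs 5.
Proof. by have := bitseqsP (cycle_pattern y); rewrite size_map size_iota. Qed.

Definition cycle_set : {set T} := [set u i | i : 'I_5].

Lemma cycle_setP t : reflect (exists2 i, i < 5 & t = u i) (t \in cycle_set).
Proof.
apply: (iffP imsetP) => [[i _ ->] | [i i5 ->]]; first by exists i.
by exists (Ordinal i5).
Qed.

Lemma card_cycle_set : #|cycle_set| = 5.
Proof.
rewrite card_imset ?card_ord // => i j /uinj ij; apply: val_inj; exact: ij.
Qed.

Lemma cycle_attachment y :
  ~~ mixed e y cycle_set \/ exists2 h, h \in cycle_set & clone e cycle_set y h.
Proof.
have /or4P [/eqP nothing | /eqP everything | /hasP [h] | F] :=
  allP one_vertex_table _ (cycle_pattern_in y).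
- left; apply/negP => /andP [/exists_inP [t /cycle_setP [j j5 ->]]].
  by rewrite -cycle_patternE // nothing nth_nseq j5.
- left; apply/negP => /andP [_ /exists_inP [t /cycle_setP [j j5 ->]]].
  by rewrite -cycle_patternE // everything nth_nseq j5.
- rewrite mem_iota /= => h5 /(clone_patternP y h5) cl; right.
  exists (u h); first by apply/cycle_setP; exists h.
  move=> t /cycle_setP [j j5 ->] jh; apply: cl => //.
  by apply: contraNneq jh => ->.
- by have := not_forbidden esym eirr noP5 noH noB (realizes_cycle_plus y); rewrite F.
Qed.

Lemma cycle_no_breaker h x w : h \in cycle_set -> clone e cycle_set x h -> ~ clone e cycle_set w h ->
  e w x != e w h -> False.
Proof.
case/cycle_setP => i i5 -> cx ncw wx.
have cxp : clone_pattern i (cycle_pattern x).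
  apply/(clone_patternP x i5) => j j5 ji; apply: cx; first by apply/cycle_setP; exists j.
  by apply: contra ji => /eqP /uinj -> //.
have ncwp : ~~ clone_pattern i (cycle_pattern w).
  apply/negP => /(clone_patternP w i5) cw; apply: ncw => t /cycle_setP [j j5 ->] ji.
  by apply: cw => //; apply: contraNneq ji => ->.
have realized : realizes e (fun k => if k == 6 then w else if k == 5 then x else u k) 7
                  (cycle_plus2 (cycle_pattern x) (cycle_pattern w) (e w x)).
  apply: realizes_extend (realizes_cycle_plus x) _ => // j j6.
  by case: (eqVneq j 5) => [_ // | j5]; rewrite cycle_patternE //; lia.
have tin : e w x \in [:: true; false] by case: (e w x).
have := allP two_vertex_table i; rewrite mem_iota => /(_ i5) /allP /(_ (cycle_pattern x)).
rewrite mem_filter cxp cycle_pattern_in => /(_ isT) /allP /(_ _ (cycle_pattern_in w)) /allP.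
move=> /(_ _ tin) /or3P [| | F].
- by rewrite cycle_patternE // (negbTE wx).
- by rewrite (negbTE ncwp).
- by move: F; apply/negP; apply: (not_forbidden esym eirr noP5 noH noB realized).
Qed.

End Cycle.

(* A prime {P5, house, bull}-free graph containing an induced C5 is C5: the
   cycle absorbs every vertex by the closure principle. *)
Lemma prime_C5 (T : finType) (e : rel T) :
  symmetric e -> irreflexive e ->
  ~ has_induced P5 e -> ~ has_induced (compl P5) e -> ~ has_induced bull e ->
  ~ has_homogeneous_set e -> has_induced C5 e -> isomorphic e C5.
Proof.
move=> esym eirr nP nH nB prime [f [finj fC]].
pose u i := f (nth ord0 ord5 i).
have uc : realizes e u 5 c5 by move=> i j _ _; rewrite /u fC.
have uinj i j : i < 5 -> j < 5 -> u i = u j -> i = j.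
  by move=> i5 j5 /finj /(congr1 val); rewrite !val_ord5.
have cover : forall t, t \in cycle_set u.
  apply: (prime_closure esym prime); first by rewrite card_cycle_set.
  - by move=> y _; apply: (cycle_attachment esym eirr nP nH nB uc).
  - by move=> h x w hC _ _; apply: (cycle_no_breaker esym eirr nP nH nB uc uinj hC).
have [g fg gf] : bijective f.
  apply: (inj_card_bij finj); rewrite -(card_codom finj); apply/subset_leq_card/subsetP => t _.
  by have /cycle_setP [i i5 ->] := cover t; exact: codom_f.
exists g; split; first by exists f.
by move=> x y; rewrite -fC !gf.
Qed.

(* An induced P4 a-b-c-d is a chain of length 2: A = (d, b), C = (c, a). *)
Lemma chain_of_P4 (T : finType) (e : rel T) a b c d :
  symmetric e -> irreflexive e -> e a b -> e b c -> e c d -> ~~ e a c -> ~~ e a d -> ~~ e b d ->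
  chain_in e 2.
Proof.
move=> esym eirr *; exists (fun i => if i == 1 then d else b), (fun i => if i == 1 then c else a).
split; move=> [|[|[|i]]] [|[|[|j]]] //= _ _; rewrite ?eirr //;
  first [ done | exact: negbTE | by rewrite esym | by rewrite esym; apply: negbTE ].
Qed.

Lemma chain_in_complK (T : finType) (e : rel T) k :
  irreflexive e -> chain_in (compl (compl e)) k -> chain_in e k.
Proof.
move=> eirr [A [C [h1 h2 h3]]]; exists A, C.
by split => i j ir jr; rewrite -(complK eirr); auto.
Qed.

Lemma largest_instance (P : nat -> Prop) N k0 : P k0 -> (forall k, P k -> k <= N) ->
  exists K, [/\ k0 <= K, P K & ~ P K.+1].
Proof.
move=> Pk0 bnd.
suff : forall n k, N - k = n -> k0 <= k -> P k -> exists K, [/\ k0 <= K, P K & ~ P K.+1].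
  by move=> /(_ _ k0 erefl (leqnn k0) Pk0).
elim=> [|n IH] k hn hk Pk.
- exists k; split => // PS; have := bnd _ PS; have := bnd _ Pk; lia.
- case: (classic (P k.+1)) => PS; last by exists k.
  by apply: (IH k.+1) => //; lia.
Qed.

Unset Implicit Arguments.

Theorem theorem4p4 (T : finType) (e : rel T) :
  symmetric e -> irreflexive e ->
  ~ has_induced P5 e -> ~ has_induced (compl P5) e -> ~ has_induced bull e ->
  [\/ #|T| <= 2,
      isomorphic e C5,
      has_homogeneous_set e
    | is_half_graph e \/ is_half_graph (compl e)].
Proof.
move=> esym eirr nP nH nB.
case: (leqP #|T| 2) => T2; first by constructor 1.
case: (classic (has_homogeneous_set e)) => [hom | prime]; first by constructor 3.
case: (classic (has_induced C5 e)) => [hC | nC]; first by constructor 2; exact: prime_C5.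
constructor 4.
(* Take a longest chain in the graph or in its complement; it starts from an
   induced P4 and is bounded by the number of vertices. *)
have [a [b [c [d [ab bc cd [ac ad bd]]]]]] := prime_has_P4 esym prime T2.
have [K [K2 PK nPK]] : exists K, [/\ 2 <= K, chain_in e K \/ chain_in (compl e) K
                                    & ~ (chain_in e K.+1 \/ chain_in (compl e) K.+1)].
  apply: (largest_instance (N := #|T|)); first by left; exact: (chain_of_P4 esym eirr ab bc cd).
  move=> k [] [A [C h]]; case: (leqP k 1) => k1; try lia.
  - by have := half_chain_card k1 h; lia.
  - by have := half_chain_card k1 h; lia.
case: PK => [[A [C h]] | [A [C h]]].
- left; exists K; split; first lia.
  apply: (half_chain_iso esym K2 h).
  by apply: (chain_spans esym eirr nP nH nB nC prime K2 h) => ?; apply: nPK; [left | right].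
- right; exists K; split; first lia.
  apply: (half_chain_iso (compl_sym esym) K2 h).
  apply: (chain_spans (compl_sym esym) (compl_irr e) (no_P5_compl eirr nH) (no_house_compl eirr nP)
            (no_bull_compl eirr nB) (no_C5_compl eirr nC) (prime_compl prime) K2 h).
  + by move=> ?; apply: nPK; right.
  + by move/(chain_in_complK eirr) => ?; apply: nPK; left.
Qed.
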